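(* Let $A,B\in\mathbb{S}^n$, $a,b\in\mathbb{R}^n$, $a_0,b_0\in\mathbb{R}$, $C\in\mathbb{R}^{m\times n}$, $d\in\mathbb{R}^m$, and suppose $\{x\in\mathbb{R}^n_+\mid Cx=d\}$ is nonempty and bounded and $q(x)=x^\top Ax+a^\top x+a_0>0$ on it. Then the optimal value of $\min\bigl\{\frac{x^\top Bx+b^\top x+b_0}{x^\top Ax+a^\top x+a_0}\bigm| x\ge0,\ Cx=d\bigr\}$ equals the optimal value of \[ \min\ b_0\rho+b^\top y+\langle B,Y\rangle\ \text{ s.t. }\ \begin{pmatrix}\rho&y^\top\\ y&Y\end{pmatrix}\in\mathcal{CP}_{n+1},\ \langle A,Y\rangle+\langle a,y\rangle+a_0\rho=1,\ \operatorname{Tr}\bigl(CYC^\top-Cyd^\top-dy^\top C^\top+\rho dd^\top\bigr)=0. \]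
   Context: $\mathcal{CP}_d$ is the cone of $d\times d$ completely positive matrices, i.e. matrices of the form $\sum_{i=1}^kh_ih_i^\top$ with $h_i\in\mathbb{R}^d_+$. $\langle X,Y\rangle=\operatorname{Tr}(XY^\top)$; $\mathbb{S}^n$ is the set of symmetric $n\times n$ matrices. *)

From HB Require Import structures.
From mathcomp Require Import all_boot all_order all_algebra.
From mathcomp Require Import all_classical all_reals ereal.
Set Implicit Arguments. Unset Strict Implicit. Unset Printing Implicit Defensive.
Import Order.TTheory GRing.Theory Num.Theory.
Local Open Scope ring_scope.
Local Open Scope classical_set_scope.

Section Defs.
Variable R : realType.

Definition frob {m n : nat} (X Y : 'M[R]_(m, n)) : R := \tr (X *m Y^T).

Definition completely_positive {d : nat} (M : 'M[R]_d) : Prop :=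
  exists (k : nat) (h : 'I_k -> 'cV[R]_d),
    (forall i j, 0 <= h i j 0) /\ M = \sum_(i < k) (h i *m (h i)^T).

Definition quadf {n : nat} (A : 'M[R]_n) (a : 'cV[R]_n) (a0 : R) (x : 'cV[R]_n) : R :=
  (x^T *m A *m x) 0 0 + (a^T *m x) 0 0 + a0.

Definition feas {m n : nat} (C : 'M[R]_(m, n)) (d : 'cV[R]_m) : set 'cV[R]_n :=
  fun x : 'cV[R]_n => (forall i, 0 <= x i 0) /\ C *m x = d.

Definition frac_value {m n : nat} (A B : 'M[R]_n) (a b : 'cV[R]_n) (a0 b0 : R)
  (C : 'M[R]_(m, n)) (d : 'cV[R]_m) : \bar R :=
  ereal_inf [set ((quadf B b b0 x / quadf A a a0 x)%:E) | x in feas C d].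

Definition lift {n : nat} (rho : R) (y : 'cV[R]_n) (Y : 'M[R]_n) : 'M[R]_(1 + n) :=
  block_mx (rho%:M : 'M[R]_1) y^T y Y.

Definition cp_feas {m n : nat} (A : 'M[R]_n) (a : 'cV[R]_n) (a0 : R)
  (C : 'M[R]_(m, n)) (d : 'cV[R]_m) : set (R * 'cV[R]_n * 'M[R]_n) :=
  fun t : R * 'cV[R]_n * 'M[R]_n => let: (rho, y, Y) := t in
     completely_positive (lift rho y Y) /\
     frob A Y + frob a y + a0 * rho = 1 /\
     \tr (C *m Y *m C^T - C *m y *m d^T - d *m y^T *m C^T + rho *: (d *m d^T)) = 0.

Definition cp_value {m n : nat} (A B : 'M[R]_n) (a b : 'cV[R]_n) (a0 b0 : R)
  (C : 'M[R]_(m, n)) (d : 'cV[R]_m) : \bar R :=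
  ereal_inf [set ((let: (rho, y, Y) := t in b0 * rho + (b^T *m y) 0 0 + frob B Y)%:E)
            | t in cp_feas A a a0 C d].

End Defs.

(* Write p for the numerator.  A feasible x gives the completely positive
   point (1, x)(1, x)^T / q(x), whose objective is the ratio p(x) / q(x).
   Conversely, write a feasible lifted matrix as sum_k (s_k, z_k)(s_k, z_k)^T
   with s_k, z_k >= 0.  The trace constraint is a sum of squares of the
   residuals C z_k - s_k d, so C z_k = s_k d; since the feasible polytope is
   bounded, s_k = 0 forces z_k = 0, and otherwise x_k = z_k / s_k is feasible.
   The objective and the normalisation become sums of the homogenised
   quadratics s_k^2 p(x_k) and s_k^2 q(x_k), and a weighted-mean argument
   produces some x_k whose ratio is at most the objective. *)
From Pilot Require Import Defs.
From HB Require Import structures.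
From mathcomp Require Import all_boot all_order all_algebra.
From mathcomp Require Import all_classical all_reals ereal.
From mathcomp Require Import ring lra.

Set Implicit Arguments.
Unset Strict Implicit.
Unset Printing Implicit Defensive.
Import Order.TTheory GRing.Theory Num.Theory.
Local Open Scope ring_scope.
Local Open Scope classical_set_scope.

Lemma outer_colE (R : pzSemiRingType) n (v : 'cV[R]_n) i j :
  (v *m v^T) i j = v i 0 * v j 0.
Proof. by rewrite mxE big_ord1 mxE. Qed.

Lemma sum_sqr_cols_eq0 (R : realDomainType) n K (v : 'I_K -> 'cV[R]_n) :
  \sum_k \sum_r (v k r 0) ^+ 2 = 0 -> forall k, v k = 0.
Proof.
move=> sum0 k; apply/matrixP => i j; rewrite (ord1 j) mxE.
have col0 : \sum_r (v k r 0) ^+ 2 = 0.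
  by apply: (psumr_eq0P (fun l _ => sumr_ge0 _ (fun r _ => sqr_ge0 _)) sum0).
by apply/eqP; rewrite -sqrf_eq0; apply/eqP; apply: (psumr_eq0P (fun r _ => sqr_ge0 _) col0).
Qed.

Lemma exists_ratio_le_sum (R : realFieldType) (I : finType) (p q : I -> R) :
  (forall k, 0 <= q k) -> (forall k, q k = 0 -> p k = 0) -> \sum_k q k = 1 ->
  exists2 k, 0 < q k & p k / q k <= \sum_k p k.
Proof.
move=> q_ge0 q0_p0 q_sum1; set P := \sum_k p k.
have [/existsP [k /andP [qk_gt0 ratio_le]] | /existsPn no_ratio_le] :=
  boolP [exists k, (0 < q k) && (p k / q k <= P)]; first by exists k.
have [k0 qk0_gt0] : exists k, 0 < q k.
  apply/existsP; apply: contraT => /existsPn q_le0.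
  suff : \sum_k q k = 0 by rewrite q_sum1 => /eqP; rewrite oner_eq0.
  by apply: big1 => k _; apply/eqP; rewrite eq_le q_ge0 andbT leNgt q_le0.
have Pq_lt_p k : 0 < q k -> P * q k < p k.
  by move=> qk_gt0; move: (no_ratio_le k); rewrite qk_gt0 -ltNge ltr_pdivlMr.
have Pq_le_p k : P * q k <= p k.
  have [qk_gt0 | ] := ltP 0 (q k); first exact/ltW/Pq_lt_p.
  by rewrite le_eqVlt ltNge q_ge0 orbF => /eqP qk0; rewrite qk0 mulr0 q0_p0.
have : P * \sum_k q k < P.
  rewrite mulr_sumr {2}/P (bigD1 k0) //= [X in _ < X](bigD1 k0) //=.
  by apply: ltr_leD; [exact: Pq_lt_p | apply: ler_sum => k _].
by rewrite q_sum1 mulr1 ltxx.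
Qed.

Section FrobeniusProduct.
Variable R : realType.

Lemma frob_sumr m n K (X : 'M[R]_(m, n)) (M : 'I_K -> 'M[R]_(m, n)) :
  frob X (\sum_(k < K) M k) = \sum_k frob X (M k).
Proof. by rewrite /frob raddf_sum mulmx_sumr raddf_sum. Qed.

Lemma frobZr m n (X M : 'M[R]_(m, n)) c : frob X (c *: M) = c * frob X M.
Proof. by rewrite /frob linearZ /= -scalemxAr linearZ. Qed.

Lemma frob_outer n (A : 'M[R]_n) (z : 'cV[R]_n) :
  frob A (z *m z^T) = (z^T *m A *m z) 0 0.
Proof. by rewrite /frob trmx_mul trmxK mulmxA mxtrace_mulC mulmxA trace_mx11. Qed.

Lemma frob_col n (a z : 'cV[R]_n) : frob a z = (a^T *m z) 0 0.
Proof. by rewrite /frob mxtrace_mulC trace_mx11 -[z^T *m a]trmxK trmx_mul trmxK mxE. Qed.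

End FrobeniusProduct.

Section Homogenisation.
Variable R : realType.

Definition hquadf n (A : 'M[R]_n) (a : 'cV[R]_n) (a0 : R) (z : 'cV[R]_n) (s : R) : R :=
  (z^T *m A *m z) 0 0 + s * (a^T *m z) 0 0 + a0 * s ^+ 2.

Lemma hquadfE n (A : 'M[R]_n) a a0 z s : s != 0 ->
  hquadf A a a0 z s = quadf A a a0 (s^-1 *: z) * s ^+ 2.
Proof. by move=> s0; rewrite /quadf /hquadf !linearZ /= -!scalemxAl !mxE; field. Qed.

Lemma hquadf00 n (A : 'M[R]_n) a a0 : hquadf A a a0 0 0 = 0.
Proof. by rewrite /hquadf !mulmx0 mxE mul0r expr2 !mulr0 !addr0. Qed.

Lemma sum_hquadf n (A : 'M[R]_n) a a0 K (s : 'I_K -> R) (z : 'I_K -> 'cV[R]_n) :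
  frob A (\sum_k z k *m (z k)^T) + frob a (\sum_k s k *: z k) + a0 * \sum_k s k ^+ 2
  = \sum_k hquadf A a a0 (z k) (s k).
Proof.
rewrite !frob_sumr mulr_sumr -!big_split /=; apply: eq_bigr => k _.
by rewrite frob_outer frobZr frob_col.
Qed.

Lemma completely_positive_liftP n (rho : R) (y : 'cV[R]_n) (Y : 'M[R]_n) :
  completely_positive (Defs.lift rho y Y) ->
  exists K (s : 'I_K -> R) (z : 'I_K -> 'cV[R]_n),
    [/\ forall k, 0 <= s k, forall k i, 0 <= z k i 0,
        rho = \sum_k s k ^+ 2, y = \sum_k s k *: z k & Y = \sum_k z k *m (z k)^T].
Proof.
move=> [K [h [h_ge0 liftE]]].
have entryE i j : Defs.lift rho y Y i j = \sum_k h k i 0 * h k j 0.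
  by rewrite liftE summxE; apply: eq_bigr => k _; rewrite outer_colE.
exists K, (fun k => h k (lshift n 0) 0), (fun k => dsubmx (h k)).
split=> [k | k i | | |].
- exact: h_ge0.
- by rewrite mxE.
- move: (entryE (lshift n 0) (lshift n 0)).
  by rewrite /Defs.lift block_mxEul mxE eqxx mulr1n => ->; under [RHS]eq_bigr do rewrite expr2.
- apply/matrixP => i j; rewrite (ord1 j) summxE.
  move: (entryE (rshift 1 i) (lshift n 0)); rewrite /Defs.lift block_mxEdl => ->.
  by apply: eq_bigr => k _; rewrite !mxE mulrC.
- apply/matrixP => i j; rewrite summxE.
  move: (entryE (rshift 1 i) (rshift 1 j)); rewrite /Defs.lift block_mxEdr => ->.
  by apply: eq_bigr => k _; rewrite outer_colE !mxE.
Qed.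

Lemma tr_lift_constraintE m n K (C : 'M[R]_(m, n)) (d : 'cV[R]_m)
    (s : 'I_K -> R) (z : 'I_K -> 'cV[R]_n) :
  \tr (C *m (\sum_k z k *m (z k)^T) *m C^T - C *m (\sum_k s k *: z k) *m d^T
     - d *m (\sum_k s k *: z k)^T *m C^T + (\sum_k s k ^+ 2) *: (d *m d^T))
  = \sum_k \sum_r ((C *m z k - s k *: d) r 0) ^+ 2.
Proof.
have -> : C *m (\sum_k z k *m (z k)^T) *m C^T - C *m (\sum_k s k *: z k) *m d^T
     - d *m (\sum_k s k *: z k)^T *m C^T + (\sum_k s k ^+ 2) *: (d *m d^T)
   = \sum_k (C *m z k - s k *: d) *m (C *m z k - s k *: d)^T.
  rewrite !mulmx_sumr !mulmx_suml (raddf_sum (@trmx _ _ _)) mulmx_sumr mulmx_suml scaler_suml.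
  rewrite -!sumrB -big_split /=; apply: eq_bigr => k _.
  rewrite linearB /= !linearZ /= !trmx_mul mulmxDl !mulmxDr.
  rewrite -?scalemxAl -?scalemxAr ?mulmxN ?mulNmx ?scalerN ?opprK ?scalerA !mulmxA expr2.
  by rewrite !addrA.
rewrite raddf_sum /=; apply: eq_bigr => k _.
by apply: eq_bigr => r _; rewrite outer_colE expr2.
Qed.

End Homogenisation.

Section Corollary.
Variables (R : realType) (m n : nat).
Variables (A B : 'M[R]_n) (a b : 'cV[R]_n) (a0 b0 : R).
Variables (C : 'M[R]_(m, n)) (d : 'cV[R]_m).

Lemma feas_recession_eq0 x0 M (z : 'cV[R]_n) :
  feas C d x0 -> (forall x, feas C d x -> forall i, `|x i 0| <= M) ->
  (forall i, 0 <= z i 0) -> C *m z = 0 -> z = 0.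
Proof.
move=> [x0_ge0 Cx0] bounded z_ge0 Cz0; apply/matrixP => i j; rewrite (ord1 j) mxE.
apply/eqP; rewrite eq_le z_ge0 andbT leNgt; apply/negP => zi_gt0.
have M_ge0 : 0 <= M by apply: le_trans (bounded _ (conj x0_ge0 Cx0) i).
pose t := (M + 1) / z i 0.
have t_ge0 : 0 <= t by apply: divr_ge0; [lra | exact: ltW].
have feas_ray : feas C d (x0 + t *: z).
  split; first by move=> l; rewrite !mxE; apply: addr_ge0 => //; apply: mulr_ge0.
  by rewrite mulmxDr -scalemxAr Cz0 scaler0 addr0.
have := bounded _ feas_ray i; rewrite !mxE /t mulrAC -mulrA divff ?gt_eqF // mulr1.
by have := x0_ge0 i; have := ler_norm (x0 i 0 + (M + 1)); lra.
Qed.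

Lemma completely_positive_lift_outer (rho : R) (x : 'cV[R]_n) :
  0 <= rho -> (forall i, 0 <= x i 0) ->
  completely_positive (Defs.lift rho (rho *: x) (rho *: (x *m x^T))).
Proof.
move=> rho_ge0 x_ge0; exists 1%N, (fun _ => Num.sqrt rho *: col_mx 1%:M x); split.
  move=> _ j; rewrite !mxE; apply: mulr_ge0; first exact: sqrtr_ge0.
  by case: splitP => l _; rewrite ?(ord1 l) ?mxE.
rewrite big_ord1 linearZ /= -scalemxAl -scalemxAr scalerA -expr2 sqr_sqrtr //.
rewrite tr_col_mx mul_col_row trmx1 mul1mx mulmx1 scale_block_mx /Defs.lift.
by rewrite mul1mx linearZ /= scalemx1.
Qed.

Hypothesis q_gt0 : forall x, feas C d x -> 0 < quadf A a a0 x.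

Lemma cp_value_le_ratio x :
  feas C d x -> (cp_value A B a b a0 b0 C d <= (quadf B b b0 x / quadf A a a0 x)%:E)%E.
Proof.
move=> feas_x; have qx_gt0 := q_gt0 feas_x; set rho := (quadf A a a0 x)^-1.
have rho_qx : rho * quadf A a a0 x = 1 by rewrite mulVf ?gt_eqF.
apply: ereal_inf_lbound; exists (rho, rho *: x, rho *: (x *m x^T)).
  split; last split.
  - by apply: completely_positive_lift_outer; [rewrite invr_ge0 ltW | case: feas_x].
  - by rewrite frobZr frob_outer frob_col -scalemxAr [X in _ + X + _ = _]mxE -rho_qx /quadf; ring.
  - case: feas_x => _ <-.
    by rewrite !linearZ /= !trmx_mul -!scalemxAl !mulmxA subrr sub0r addNr mxtrace0.
by rewrite frobZr frob_outer -scalemxAr [X in _ + X + _]mxE /quadf; congr (_%:E); ring.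
Qed.

Variables (x0 : 'cV[R]_n) (M : R).
Hypothesis feas_x0 : feas C d x0.
Hypothesis feas_bounded : forall x, feas C d x -> forall i, `|x i 0| <= M.

Lemma cp_feas_homogenise rho y Y :
  cp_feas A a a0 C d (rho, y, Y) ->
  exists K (s : 'I_K -> R) (z : 'I_K -> 'cV[R]_n),
  [/\ forall k, s k = 0 \/ 0 < s k, forall k, s k = 0 -> z k = 0,
      forall k, 0 < s k -> feas C d ((s k)^-1 *: z k),
      \sum_k hquadf A a a0 (z k) (s k) = 1 &
      b0 * rho + (b^T *m y) 0 0 + frob B Y = \sum_k hquadf B b b0 (z k) (s k)].
Proof.
move=> [/completely_positive_liftP [K [s [z [s_ge0 z_ge0 -> -> ->]]]] [normal1]].
rewrite tr_lift_constraintE => /sum_sqr_cols_eq0 residual0.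
have Cz k : C *m z k = s k *: d by apply/eqP; rewrite -subr_eq0 residual0.
exists K, s, z; split.
- by move=> k; have := s_ge0 k; rewrite le0r => /orP [/eqP | ]; [left | right].
- move=> k sk0; apply: (feas_recession_eq0 feas_x0 feas_bounded (z_ge0 k)).
  by rewrite Cz sk0 scale0r.
- move=> k sk_gt0; split.
    by move=> i; rewrite mxE; apply: mulr_ge0; [rewrite invr_ge0 ltW | exact: z_ge0].
  by rewrite -scalemxAr Cz scalerA mulVf ?gt_eqF // scale1r.
- by rewrite -sum_hquadf.
- by rewrite -frob_col -sum_hquadf; ring.
Qed.

Lemma frac_value_le_cp_obj rho y Y :
  cp_feas A a a0 C d (rho, y, Y) ->
  (frac_value A B a b a0 b0 C d <= (b0 * rho + (b^T *m y) 0 0 + frob B Y)%:E)%E.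
Proof.
move=> /cp_feas_homogenise [K [s [z [s_cases z0 feas_x normal1 ->]]]].
pose x k := (s k)^-1 *: z k.
have hquadf_s0 A' a' a0' k : s k = 0 -> hquadf A' a' a0' (z k) (s k) = 0.
  by move=> sk0; rewrite (z0 k sk0) sk0 hquadf00.
have hquadf_gt0 A' a' a0' k : 0 < s k ->
    hquadf A' a' a0' (z k) (s k) = quadf A' a' a0' (x k) * s k ^+ 2.
  by move=> sk_gt0; rewrite hquadfE ?gt_eqF.
have [k qk_gt0 ratio_le] : exists2 k, 0 < hquadf A a a0 (z k) (s k) &
    hquadf B b b0 (z k) (s k) / hquadf A a a0 (z k) (s k)
      <= \sum_k hquadf B b b0 (z k) (s k).
  apply: exists_ratio_le_sum normal1 => k; case: (s_cases k) => [sk0 | sk_gt0].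
  - by rewrite hquadf_s0.
  - by rewrite hquadf_gt0 // mulr_ge0 ?sqr_ge0 // ltW // (q_gt0 (feas_x k sk_gt0)).
  - by rewrite !hquadf_s0.
  - rewrite hquadf_gt0 // => /eqP; rewrite mulf_eq0 expf_eq0 !gt_eqF //.
    exact: q_gt0 (feas_x k sk_gt0).
have sk_gt0 : 0 < s k.
  by case: (s_cases k) => // sk0; move: qk_gt0; rewrite hquadf_s0 ?ltxx.
apply: ge_ereal_inf; exists (quadf B b b0 (x k) / quadf A a a0 (x k))%:E.
  by exists (x k) => //; exact: feas_x.
by move: ratio_le; rewrite !hquadf_gt0 // -mulf_div divff ?mulr1 ?gt_eqF ?exprn_gt0.
Qed.

End Corollary.

Theorem corollary3 (R : realType) (m n : nat)
  (A B : 'M[R]_n) (a b : 'cV[R]_n) (a0 b0 : R)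
  (C : 'M[R]_(m, n)) (d : 'cV[R]_m) :
  A^T = A -> B^T = B ->
  feas C d !=set0 ->
  (exists M : R, forall x, feas C d x -> forall i, `|x i 0| <= M) ->
  (forall x, feas C d x -> 0 < quadf A a a0 x) ->
  frac_value A B a b a0 b0 C d = cp_value A B a b a0 b0 C d.
Proof.
move=> _ _ [x0 feas_x0] [M feas_bounded] q_gt0.
apply/eqP; rewrite eq_le; apply/andP; split.
- apply/ereal_infP => _ [[[rho y] Y] cp_feas_t <-].
  by move: (frac_value_le_cp_obj B b b0 q_gt0 feas_x0 feas_bounded cp_feas_t).
- apply/ereal_infP => _ [x feas_x <-].
  by move: (cp_value_le_ratio B b b0 q_gt0 feas_x).
Qed.
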